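(* Let $\ell$ be an odd prime, $\zeta_\ell$ a primitive $\ell$-th root of unity, $p\in\mathbb{P}$, and $\mathfrak{p}$ a prime ideal of $\mathbb{Z}[\zeta_\ell]$ lying above $p$. For every positive real number $T$, the cardinality of $\{d\in\mathbb{N}: d<T \text{ and } \mathfrak{p}^2\mid d-\zeta_\ell\}$ is at most $T/p^2+1$.
   Context: $\Phi_\ell(X)$ denotes the $\ell$-th cyclotomic polynomial, and $\mathbb{P}$ denotes the set of primes $p$ that divide $\Phi_\ell(d)$ for some $d\in\mathbb{N}$. *)

From mathcomp Require Import all_boot all_order all_algebra all_field.
Set Implicit Arguments. Unset Strict Implicit. Unset Printing Implicit Defensive.
Import Order.TTheory GRing.Theory Num.Theory.
Local Open Scope ring_scope.

Definition Zzeta (z : algC) (x : algC) : Prop :=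
  exists a : seq int, x = \sum_(i < size a) (a`_i)%:~R * z ^+ i.

Definition is_ideal (z : algC) (I : algC -> Prop) : Prop :=
  [/\ forall x, I x -> Zzeta z x,
      I 0,
      forall x y, I x -> I y -> I (x + y)
    & forall r x, Zzeta z r -> I x -> I (r * x)].

Definition prime_ideal (z : algC) (I : algC -> Prop) : Prop :=
  [/\ is_ideal z I, ~ I 1
    & forall x y, Zzeta z x -> Zzeta z y -> I (x * y) -> I x \/ I y].

Definition lies_above (I : algC -> Prop) (p : nat) : Prop := I p%:R.

(* Membership in I^2: x is a finite sum of products of two elements of I.
   For ideals of the Dedekind domain Z[z], "I^2 | x" means x \in I^2. *)
Definition in_ideal_sq (I : algC -> Prop) (x : algC) : Prop :=
  exists s : seq (algC * algC),
    (forall u, u \in s -> I u.1 /\ I u.2) /\ x = \sum_(u <- s) u.1 * u.2.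

(* The set P: primes p dividing Phi_l(d) for some natural d. *)
Definition inPP (l p : nat) : Prop :=
  prime p /\ exists d : nat, (p%:Z %| (Cyclotomic l).[d%:Z])%Z.

From HB Require Import structures.
From mathcomp Require Import all_boot all_order all_algebra all_field.
From mathcomp Require Import ring.
Set Implicit Arguments.
Unset Strict Implicit.
Unset Printing Implicit Defensive.
Import Order.TTheory GRing.Theory Num.Theory.
Local Open Scope ring_scope.

(* If d - z lies in P^2 then z = d mod P, so P behaves like evaluation at d:
   every f(z) in P has p | f(d).
   When p <> l, d is a simple root of Phi_l modulo p, because Phi_l divides
   X^l - 1, which is separable modulo p. Hensel's lemma lifts d to an integer
   a with p^2 | Phi_l(a) and z - a in P; then every f(z) in P^2 has
   p^2 | f(a), and since d - z = f(z) forces f = d - X modulo Phi_l, we get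
   d = a mod p^2. Thus all admissible d lie in one residue class mod p^2,
   and at most T/p^2 + 1 of them are below T.
   When p = l, P = (z - 1) and l lies in (z - 1)^2, so
   d - z = (d - 1) - (z - 1) is congruent to -(z - 1) modulo (z - 1)^2 and
   never lies in P^2: no d qualifies. *)

Fact commr_zeta (z : algC) : commr_rmorph (intr : int -> algC) z.
Proof. by move=> n; apply: mulrC. Qed.

Definition zeval (z : algC) : {poly int} -> algC := horner_morph (commr_zeta z).
HB.instance Definition _ z := GRing.RMorphism.on (zeval z).

Section Zeval.
Variable z : algC.

Lemma zevalC c : zeval z c%:P = c%:~R.
Proof. exact: horner_morphC. Qed.

Lemma zevalX : zeval z 'X = z.
Proof. exact: horner_morphX. Qed.

Lemma ZzetaP x : Zzeta z x <-> exists f, x = zeval z f.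
Proof.
have horner_wide (f : {poly int}) n : (size f <= n)%N ->
    zeval z f = \sum_(i < n) (f`_i)%:~R * z ^+ i.
  move=> le_f_n; rewrite /zeval /horner_morph (@horner_coef_wide _ n).
    by apply: eq_bigr => i _; rewrite coef_map.
  by rewrite size_map_inj_poly //; apply: intr_inj.
split=> [[a ->] | [f ->]]; last by exists f; apply: horner_wide.
exists (Poly a); rewrite (horner_wide _ (size a)) ?size_Poly //.
by apply: eq_bigr => i _; rewrite coef_Poly.
Qed.

End Zeval.

Lemma poly_factor (R : comNzRingType) (f : {poly R}) (c : R) :
  exists g, f = f.[c]%:P + ('X - c%:P) * g.
Proof.
have /factor_theorem[g Dg] : root (f - f.[c]%:P) c by rewrite rootE !hornerE subrr.
by exists g; rewrite mulrC -Dg addrC subrK.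
Qed.

Lemma poly_taylor2 (R : comNzRingType) (f : {poly R}) (c : R) :
  exists g, f = f.[c]%:P + (f^`()).[c]%:P * ('X - c%:P) + ('X - c%:P) ^+ 2 * g.
Proof.
have [g Dg] := poly_factor f c; have [h Dh] := poly_factor g c.
have -> : (f^`()).[c] = g.[c].
  by rewrite Dg derivD derivC derivM derivXsubC !hornerE subrr mul0r addr0.
by exists h; rewrite {1}Dg {1}Dh; ring.
Qed.

Lemma hensel_lift (f : {poly int}) (p : nat) (c : int) : prime p ->
  (p %| f.[c])%Z -> ~~ (p %| (f^`()).[c])%Z ->
  exists t, (p%:Z ^+ 2 %| f.[c + p%:Z * t])%Z.
Proof.
move=> p_pr /dvdzP[m Dm] p'f'c.
have /eqP co_pf' : coprimez p (f^`()).[c].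
  by rewrite coprimezE prime_coprime // -dvdzE.
have [u [v]] := Bezoutz p (f^`()).[c]; rewrite co_pf' => Duv.
have [g Dg] := poly_taylor2 f c.
exists (- (m * v)); rewrite {1}Dg !hornerE Dm; set w := g.[_].
apply/dvdzP; exists (m * u + (m * v) ^+ 2 * w).
transitivity (m * p%:Z * (1 - (u * p%:Z + v * (f^`()).[c]))
              + (m * u + (m * v) ^+ 2 * w) * p%:Z ^+ 2).
  by ring.
by rewrite Duv subrr mulr0 add0r.
Qed.

Section Ideal.
Variables (z : algC) (P : algC -> Prop).
Hypothesis P_ideal : is_ideal z P.

Lemma ideal_zeval x : P x -> exists f, x = zeval z f.
Proof. by case: P_ideal => P_Z _ _ _ /P_Z/ZzetaP. Qed.

Lemma ideal0 : P 0. Proof. by case: P_ideal. Qed.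

Lemma idealD x y : P x -> P y -> P (x + y).
Proof. by case: P_ideal => _ _ + _; apply. Qed.

Lemma ideal_zevalMl f x : P x -> P (zeval z f * x).
Proof. by case: P_ideal => _ _ _; apply; apply/ZzetaP; exists f. Qed.

Lemma ideal_intrMl (n : int) x : P x -> P (n%:~R * x).
Proof. by rewrite -(zevalC z n); apply: ideal_zevalMl. Qed.

Lemma idealN x : P x -> P (- x).
Proof. by move/(ideal_intrMl (-1)); rewrite mulN1r. Qed.

Lemma idealB x y : P x -> P y -> P (x - y).
Proof. by move=> Px /idealN; apply: idealD. Qed.

Lemma in_ideal_sq_ind (Q : algC -> Prop) :
  Q 0 -> (forall x y, Q x -> Q y -> Q (x + y)) ->
  (forall x y, P x -> P y -> Q (x * y)) ->
  forall x, in_ideal_sq P x -> Q x.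
Proof.
move=> Q0 QD QM x [s [Ps ->]]; elim: s Ps => [|u s IHs] Ps; first by rewrite big_nil.
rewrite big_cons; apply: QD; first by have [] := Ps u (mem_head _ _); apply: QM.
by apply: IHs => v vs; apply: Ps; rewrite inE vs orbT.
Qed.

Lemma ideal_of_sq x : in_ideal_sq P x -> P x.
Proof.
apply: in_ideal_sq_ind; [exact: ideal0 | exact: idealD |].
by move=> y w /ideal_zeval[f ->] Pw; apply: ideal_zevalMl.
Qed.

Variable p : nat.
Hypotheses (p_pr : prime p) (P1 : ~ P 1) (Pp : P p%:R).

Lemma ideal_intr_dvdz (n : int) : P n%:~R -> (p %| n)%Z.
Proof.
move=> Pn; apply/negPn/negP => p_n.
have /eqP co_pn : coprimez p n by rewrite coprimezE prime_coprime // -dvdzE.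
have [u [v]] := Bezoutz p n; rewrite co_pn => Duv.
by apply: P1; rewrite -[1]/(1%:~R) -Duv intrD !intrM; apply: idealD; apply: ideal_intrMl.
Qed.

Lemma ideal_zeval_dvdz (c : int) f : P (z - c%:~R) -> P (zeval z f) -> (p %| f.[c])%Z.
Proof.
move=> Pzc Pf; apply: ideal_intr_dvdz; have [g Dg] := poly_factor f c.
have -> : (f.[c])%:~R = zeval z f - (z - c%:~R) * zeval z g.
  by rewrite {2}Dg rmorphD rmorphM rmorphB /= zevalX !zevalC addrK.
by apply: idealB => //; rewrite mulrC; apply: ideal_zevalMl.
Qed.

Lemma ideal_sq_zeval_dvdz (c : int) x : P (z - c%:~R) -> in_ideal_sq P x ->
  exists f, x = zeval z f /\ (p%:Z ^+ 2 %| f.[c])%Z.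
Proof.
move=> Pzc; move: x; apply: in_ideal_sq_ind.
- by exists 0; rewrite rmorph0 horner0 dvdz0.
- move=> _ _ [f [-> p2f]] [g [-> p2g]].
  by exists (f + g); rewrite rmorphD hornerD rpredD.
move=> y w Py Pw; have [f Df] := ideal_zeval Py; have [g Dg] := ideal_zeval Pw.
exists (f * g); rewrite rmorphM /= hornerM expr2 -Df -Dg.
by split=> //; apply: dvdz_mul; apply: ideal_zeval_dvdz; rewrite -?Df -?Dg.
Qed.

End Ideal.

Section Cyclotomic.
Variables (l : nat) (z : algC).
Hypothesis prim : l.-primitive_root z.

Lemma zeval_Cyclotomic : zeval z 'Phi_l = 0.
Proof. by apply/rootP; rewrite /zeval /horner_morph (Cintr_Cyclotomic prim) root_cyclotomic. Qed.

Lemma Cyclotomic_dvd_zeval0 f : zeval z f = 0 -> exists q, f = 'Phi_l * q.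
Proof.
move=> fz0.
have ZtoQtoC (g : {poly int}) :
    map_poly ratr (map_poly intr g) = map_poly (intr : int -> algC) g.
  by rewrite -map_poly_comp; apply: eq_map_poly => n /=; rewrite rmorph_int.
have [m [Dm _] dv_m] := minCpolyP z.
have {}Dm : m = map_poly intr 'Phi_l.
  apply: (map_inj_poly (fmorph_inj (@ratr algC)) (rmorph0 _)).
  by rewrite -Dm ZtoQtoC (minCpoly_cyclotomic prim) (Cintr_Cyclotomic prim).
have : m %| map_poly intr f by rewrite -dv_m ZtoQtoC; apply/rootP.
rewrite Dm dvdp_rat_int => /dvdpP_int[q ->].
by exists q; rewrite zprimitive_monic ?Cyclotomic_monic.
Qed.

End Cyclotomic.

Lemma Cyclotomic_deriv_ndvdz (n p : nat) (c : int) : prime p -> ~~ (p %| n)%N ->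
  (p %| ('Phi_n).[c])%Z -> ~~ (p %| (('Phi_n)^`()).[c])%Z.
Proof.
move=> p_pr p'n p_Phi; apply/negP => p_Phi'.
have n_gt0 : (0 < n)%N by apply: contraR p'n; rewrite -eqn0Ngt => /eqP->.
have [q Dq] : exists q, 'X^n - 1 = 'Phi_n * q.
  exists (\prod_(d <- rem n (divisors n)) 'Phi_d).
  by rewrite -prod_Cyclotomic // (big_rem n) // -dvdn_divisors.
have p_cn1 : (p %| c ^+ n - 1)%Z.
  by have := congr1 (horner^~ c) Dq; rewrite /= !hornerE => ->; apply: dvdz_mulr.
have p_ncn : (p %| c ^+ n.-1 *+ n)%Z.
  have := congr1 (fun f => (f^`()).[c]) Dq.
  rewrite /= derivB derivXn derivC subr0 derivM !hornerE hornerMn hornerXn => ->.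
  by rewrite rpredD // dvdz_mulr.
have p_c : (p %| c)%Z.
  move: p_ncn; rewrite -mulr_natr natz !dvdzE abszM abszX /= Euclid_dvdM // (negbTE p'n) orbF.
  by rewrite Euclid_dvdX // => /andP[].
have := rpredB (dvdz_exp n_gt0 p_c) p_cn1.
by rewrite opprB addrC subrK dvdz1 absz_nat => /eqP p1; rewrite p1 in p_pr.
Qed.

Section Unramified.
Variables (l : nat) (z : algC) (P : algC -> Prop) (p : nat).
Hypotheses (prim : l.-primitive_root z) (P_ideal : is_ideal z P).
Hypotheses (p_pr : prime p) (P1 : ~ P 1) (Pp : P p%:R) (p'l : ~~ (p %| l)%N).

Lemma ideal_hensel_Cyclotomic_root (c : int) : P (z - c%:~R) ->
  exists a : int, P (z - a%:~R) /\ (p%:Z ^+ 2 %| ('Phi_l).[a])%Z.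
Proof.
move=> Pzc.
have p_Phi : (p %| ('Phi_l).[c])%Z.
  apply: (ideal_zeval_dvdz P_ideal p_pr P1 Pp Pzc).
  by rewrite (zeval_Cyclotomic prim); apply: ideal0 P_ideal.
have [t p2Phi] := hensel_lift p_pr p_Phi (Cyclotomic_deriv_ndvdz p_pr p'l p_Phi).
exists (c + p%:Z * t); split=> //.
rewrite intrD opprD addrA intrM mulrC; apply: (idealB P_ideal Pzc).
exact: ideal_intrMl P_ideal _ _ Pp.
Qed.

Lemma sub_zeta_in_ideal_sq_dvdz (a d : int) :
  P (z - a%:~R) -> (p%:Z ^+ 2 %| ('Phi_l).[a])%Z ->
  in_ideal_sq P (d%:~R - z) -> (p%:Z ^+ 2 %| d - a)%Z.
Proof.
move=> Pza p2Phi /(ideal_sq_zeval_dvdz P_ideal p_pr P1 Pp Pza)[f [Df p2f]].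
have [q Dq] : exists q, f - (d%:P - 'X) = 'Phi_l * q.
  apply: (Cyclotomic_dvd_zeval0 prim).
  by rewrite !rmorphB /= zevalC zevalX -Df subrr.
have -> : d - a = f.[a] - (f.[a] - (d - a)) by rewrite subKr.
have := congr1 (horner^~ a) Dq; rewrite /= !hornerE => ->.
by rewrite rpredB // dvdz_mulr.
Qed.

Lemma in_ideal_sq_sub_zeta_congr (d e : nat) :
  in_ideal_sq P (d%:R - z) -> in_ideal_sq P (e%:R - z) -> d = e %[mod p ^ 2].
Proof.
move=> Pd Pe.
have Pzd : P (z - d%:R).
  by rewrite -opprB; apply: (idealN P_ideal); apply: ideal_of_sq P_ideal _ Pd.
have [a [Pza p2Phi]] := @ideal_hensel_Cyclotomic_root d Pzd.
have p2de : (p%:Z ^+ 2 %| d%:Z - e%:Z)%Z.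
  have -> : d%:Z - e%:Z = (d%:Z - a) - (e%:Z - a) by ring.
  by rewrite rpredB // sub_zeta_in_ideal_sq_dvdz.
apply/eqP; move: p2de; rewrite -eqz_mod_dvd -[X in X ^+ 2]natz -natrX natz.
by rewrite !modz_nat eqz_nat.
Qed.

End Unramified.

Lemma prim_root_neq1 (l : nat) (z : algC) :
  (1 < l)%N -> l.-primitive_root z -> z != 1.
Proof.
move=> l_gt1 prim; apply: contraTneq l_gt1 => z1.
by have := prim_order_dvd prim 1; rewrite expr1 z1 eqxx dvdn1 => /eqP->.
Qed.

Lemma zeta_sub1_sq_dvd_order (l : nat) (z : algC) : odd l -> (1 < l)%N ->
  l.-primitive_root z -> exists V, l%:R = (z - 1) ^+ 2 * zeval z V.
Proof.
move=> l_odd l_gt1 prim; set e := z - 1; set h := l.-1./2.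
have e_neq0 : e != 0 by rewrite subr_eq0 (prim_root_neq1 l_gt1 prim).
have sum_z : \sum_(i < l) z ^+ i = 0.
  have := subrX1 z l; rewrite (prim_expr_order prim) subrr => /esym/eqP.
  by rewrite mulf_eq0 (negbTE e_neq0) => /eqP.
pose f : {poly int} := \sum_(i < l) 'X^i.
have f1 : f.[1] = l.
  rewrite horner_sum; under eq_bigr do rewrite hornerXn expr1n.
  by rewrite sumr_const card_ord natz.
have f'1 : (f^`()).[1] = (l * h)%N.
  rewrite raddf_sum /= horner_sum; under eq_bigr do rewrite derivXn hornerMn hornerXn expr1n.
  by rewrite -natr_sum -(big_mkord predT (fun i => i)) bin2_sum bin2odd // natz.
(* Expanding 1 + X + ... + X^(l-1) at 1 gives 0 = l (1 + h e) + e^2 g(z);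
   multiplying by 1 - h e isolates l as a multiple of e^2. *)
have [g Dg] := poly_taylor2 f 1.
have zeval_f : 0 = l%:R + l%:R * h%:R * e + e ^+ 2 * zeval z g.
  have := congr1 (zeval z) Dg.
  rewrite rmorph_sum !(rmorphB, rmorphD, rmorphXn, rmorphM) /= !zevalC zevalX f1 f'1.
  under eq_bigr do rewrite rmorphXn /= zevalX.
  by rewrite sum_z mulr1z -!pmulrn => ->; rewrite natrM.
exists ((l * h ^ 2)%N%:Z%:P - g * (1 - h%:Z%:P * ('X - 1))).
rewrite !(rmorphB, rmorphM) /= rmorph1 !zevalC zevalX -!pmulrn -/e.
apply/eqP; rewrite -subr_eq0; apply/eqP.
transitivity ((1 - h%:R * e) * (l%:R + l%:R * h%:R * e + e ^+ 2 * zeval z g)).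
  by ring.
by rewrite -zeval_f mulr0.
Qed.

Section Ramified.
Variables (l : nat) (z : algC) (P : algC -> Prop).
Hypotheses (l_pr : prime l) (l_odd : odd l) (prim : l.-primitive_root z).
Hypotheses (P_ideal : is_ideal z P) (P1 : ~ P 1) (Pl : P l%:R).

Lemma ideal_sub_zeta_dvdz (d : nat) : P (z - d%:R) -> (l %| d%:Z - 1)%Z.
Proof.
move=> Pzd.
have l_dl1 : (l %| d%:Z ^+ l - 1)%Z.
  have := @ideal_zeval_dvdz z P P_ideal l l_pr P1 Pl d ('X^l - 1) Pzd.
  rewrite !hornerE; apply; rewrite rmorphB rmorphXn rmorph1 /= zevalX.
  by rewrite (prim_expr_order prim) subrr; apply: ideal0 P_ideal.
have l_dld : (l %| d%:Z ^+ l - d%:Z)%Z.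
  rewrite -eqz_mod_dvd -[X in X ^+ l]natz -natrX natz !modz_nat eqz_nat.
  by rewrite fermat_little.
have -> : d%:Z - 1 = (d%:Z ^+ l - 1) - (d%:Z ^+ l - d%:Z) by ring.
exact: rpredB.
Qed.

Lemma ideal_zeta_sub1 (d : nat) : P (z - d%:R) -> P (z - 1).
Proof.
move=> Pzd; have /dvdzP[k Dk] := ideal_sub_zeta_dvdz Pzd.
have -> : z - 1 = (z - d%:R) + k%:~R * l%:R.
  by rewrite -[l%:R]/((l%:Z)%:~R) -intrM -Dk intrB mulr1z -pmulrn; ring.
by apply: (idealD P_ideal Pzd); apply: ideal_intrMl P_ideal _ _ Pl.
Qed.

Lemma ideal_zeta_sub1_dvd x : P (z - 1) -> P x -> exists f, x = (z - 1) * zeval z f.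
Proof.
move=> Pe Px; have [f Df] := ideal_zeval P_ideal Px; rewrite Df in Px.
have /dvdzP[j Dj] := @ideal_zeval_dvdz z P P_ideal l l_pr P1 Pl 1 f Pe Px.
have [g Dg] := poly_factor f 1.
have [V DV] := zeta_sub1_sq_dvd_order l_odd (prime_gt1 l_pr) prim.
exists (j%:P * ('X - 1) * V + g).
rewrite Df {1}Dg !(rmorphD, rmorphM, rmorphB, rmorphN, rmorph1) /= !zevalC zevalX Dj intrM.
rewrite -[(l%:Z)%:~R]/(l%:R) DV; ring.
Qed.

Lemma in_ideal_sq_zeta_sub1_dvd x : P (z - 1) -> in_ideal_sq P x ->
  exists y, P y /\ x = (z - 1) * y.
Proof.
move=> Pe; move: x; apply: in_ideal_sq_ind.
- by exists 0; split; [apply: ideal0 P_ideal | rewrite mulr0].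
- move=> _ _ [y [Py ->]] [w [Pw ->]].
  by exists (y + w); split; [exact: idealD P_ideal _ _ Py Pw | rewrite mulrDr].
move=> y w Py Pw; have [f ->] := ideal_zeta_sub1_dvd Pe Py.
by exists (zeval z f * w); split; [exact: ideal_zevalMl P_ideal _ _ Pw | rewrite mulrA].
Qed.

Lemma sub_zeta_notin_ideal_sq (d : nat) : ~ in_ideal_sq P (d%:R - z).
Proof.
move=> Pd.
have Pzd : P (z - d%:R).
  by rewrite -opprB; apply: (idealN P_ideal); apply: ideal_of_sq P_ideal _ Pd.
have Pe := ideal_zeta_sub1 Pzd.
have [y [Py Dy]] := in_ideal_sq_zeta_sub1_dvd Pe Pd.
have /dvdzP[k Dk] := ideal_sub_zeta_dvdz Pzd.
have [V DV] := zeta_sub1_sq_dvd_order l_odd (prime_gt1 l_pr) prim.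
have e_neq0 : z - 1 != 0 by rewrite subr_eq0 (prim_root_neq1 (prime_gt1 l_pr) prim).
have Dy' : y = k%:~R * zeval z V * (z - 1) - 1.
  apply: (mulfI e_neq0); rewrite -Dy.
  have -> : d%:R = 1 + k%:~R * l%:R :> algC.
    by rewrite -[l%:R]/((l%:Z)%:~R) -intrM -Dk intrB mulr1z -pmulrn; ring.
  by rewrite DV; ring.
apply: P1; have -> : 1 = k%:~R * zeval z V * (z - 1) - y by rewrite Dy'; ring.
apply: (idealB P_ideal) Py; rewrite -(zevalC z k) -rmorphM.
exact: ideal_zevalMl.
Qed.

End Ramified.

Lemma size_uniq_eqmod (q m : nat) (s : seq nat) : (0 < q)%N -> uniq s ->
  {in s &, forall d e, d = e %[mod q]} -> {in s, forall d, d <= m}%N ->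
  (size s <= m %/ q + 1)%N.
Proof.
move=> q_gt0 s_uniq s_mod s_le.
have div_inj : {in s &, injective (divn^~ q)}.
  by move=> d e ds es de; rewrite (divn_eq d q) (divn_eq e q) de (s_mod d e ds es).
rewrite -(size_map (divn^~ q)) addn1 -(size_iota 0 (m %/ q).+1).
apply: uniq_leq_size; first by rewrite map_inj_in_uniq.
by move=> _ /mapP[d ds ->]; rewrite mem_iota ltnS leq_div2r // s_le.
Qed.

Lemma size_uniq_eqmod_ltr (R : realFieldType) (T : R) (q : nat) (s : seq nat) :
  (0 < q)%N -> 0 < T -> uniq s -> {in s &, forall d e, d = e %[mod q]} ->
  {in s, forall d, d%:R < T} -> (size s)%:R <= T / q%:R + 1.
Proof.
move=> q_gt0 T_gt0 s_uniq s_mod s_lt.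
pose m := (\max_(d <- s) d)%N.
have m_lt : m%:R < T.
  rewrite /m big_seq; elim/big_ind: _ => // x y.
  by rewrite /maxn; case: ltnP.
have s_le : {in s, forall d, d <= m}%N by move=> d ds; apply: leq_bigmax_seq.
have := size_uniq_eqmod q_gt0 s_uniq s_mod s_le.
rewrite -(ler_nat R) natrD => /le_trans; apply; rewrite lerD2r ler_pdivlMr ?ltr0n //.
by rewrite -natrM; apply: le_trans (ltW m_lt); rewrite ler_nat leq_trunc_div.
Qed.

Theorem lemma2 (l : nat) (z : algC) (p : nat) (P : algC -> Prop)
    (R : realFieldType) (T : R) :
  prime l -> odd l -> l.-primitive_root z ->
  inPP l p -> prime_ideal z P -> lies_above P p ->
  0 < T ->
  forall s : seq nat, uniq s ->
    (forall d, d \in s -> (d%:R < T) /\ in_ideal_sq P (d%:R - z)) ->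
    (size s)%:R <= T / (p%:R ^+ 2) + 1.
Proof.
move=> l_pr l_odd prim [p_pr _] [P_ideal P1 _] Pp T_gt0 s s_uniq s_P.
have s_mod : {in s &, forall d e, d = e %[mod p ^ 2]}.
  move=> d e /s_P[_ Pd] /s_P[_ Pe].
  have [pl | p_neq_l] := eqVneq p l.
    by rewrite pl in Pp; case: (sub_zeta_notin_ideal_sq l_pr l_odd prim P_ideal P1 Pp Pd).
  have p'l : ~~ (p %| l)%N by rewrite dvdn_prime2.
  exact: in_ideal_sq_sub_zeta_congr prim P_ideal p_pr P1 Pp p'l d e Pd Pe.
rewrite -natrX; apply: size_uniq_eqmod_ltr => //; first by rewrite expn_gt0 prime_gt0.
by move=> d /s_P[].
Qed.
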